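(* Let $G$ be a tight $(2P_2+P_1)$-free graph with $m=m(G)$, dense set $T=\{u_1,\dots,u_m\}$, and $S=\delta T$. Let $c$ be a b-colouring of $G$ with exactly $m$ colours and colour classes $V_1,\dots,V_m$, indexed so that $V_i\cap T=\{u_i\}$ for each $i$. For non-adjacent $u\in T$ and $s\in S$, let $T(u,s)$ be the set of neighbours of $s$ in $T$ that are not adjacent to $u$. If $|V_i|\geq 3$ for some $i$ and $s\in S\cap V_i$, then every vertex of $T(u_i,s)$ is adjacent to every vertex of $T\setminus(T(u_i,s)\cup\{u_i\})$.
   Context: A colouring of $G$ is a map $c:V(G)\to\mathbb{Z}^+$ with adjacent vertices receiving distinct colours. A vertex is b-chromatic under $c$ if it is adjacent to a vertex of every colour used by $c$ other than its own; a b-colouring is a colouring in which every colour class has a b-chromatic vertex. $m(G)$ is the largest $k$ such that $G$ has at least $k$ vertices of degree at least $k-1$; a vertex of degree at least $m(G)-1$ is dense; $G$ is tight if it has exactly $m(G)$ dense vertices, each of degree exactly $m(G)-1$. $\delta T=\left(\bigcup_{u\in T}N(u)\right)\setminus T$. (In any b-colouring of a tight graph with $m(G)$ colours, each colour class contains exactly one vertex of $T$, so the indexing above exists.) *)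

From mathcomp Require Import all_boot.
Set Implicit Arguments. Unset Strict Implicit. Unset Printing Implicit Defensive.

Section Graphs.
Variables (V : finType) (g : rel V).

Definition simple_graph : Prop := symmetric g /\ irreflexive g.

Definition nbhd (v : V) : {set V} := [set w | g v w].
Definition deg (v : V) : nat := #|nbhd v|.

Definition m_index : nat :=
  \max_(k < #|V|.+1 | k <= #|[set v | k.-1 <= deg v]|) (k : nat).

Definition dense_set : {set V} := [set v | m_index.-1 <= deg v].

Definition tight : Prop :=
  #|dense_set| = m_index /\ forall v, v \in dense_set -> deg v = m_index.-1.

Definition delta (X : {set V}) : {set V} :=
  (\bigcup_(u in X) nbhd u) :\: X.

Definition free_2P2P1 : Prop :=
  ~ exists a b c d e : V,
      uniq [:: a; b; c; d; e] /\
      g a b /\ g c d /\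
      ~~ g a c /\ ~~ g a d /\ ~~ g b c /\ ~~ g b d /\
      ~~ g e a /\ ~~ g e b /\ ~~ g e c /\ ~~ g e d.

Definition colouring (c : V -> nat) : Prop :=
  (forall v, 0 < c v) /\ (forall v w, g v w -> c v != c w).

Definition colours_used (c : V -> nat) : seq nat := undup [seq c v | v <- enum V].

Definition b_chromatic (c : V -> nat) (v : V) : Prop :=
  forall j, j \in colours_used c -> j != c v -> exists w, g v w /\ c w = j.

Definition b_colouring (c : V -> nat) : Prop :=
  colouring c /\
  forall j, j \in colours_used c -> exists v, c v = j /\ b_chromatic c v.

Definition colour_class (c : V -> nat) (j : nat) : {set V} := [set v | c v == j].

Definition T_us (X : {set V}) (u s : V) : {set V} :=
  [set t in X | g s t && ~~ g u t].

End Graphs.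

From mathcomp Require Import all_boot.
From mathcomp Require Import zify.
Set Implicit Arguments. Unset Strict Implicit. Unset Printing Implicit Defensive.

(* In a tight graph b-coloured with m colours every colour has a b-chromatic
   vertex of degree >= m - 1, i.e. a vertex of T; as |T| = m the colouring is
   injective on T, so every vertex of T is b-chromatic, and since it has only
   m - 1 neighbours they carry pairwise distinct colours.  If some x in T(u,s)
   were not adjacent to y in T \ (T(u,s) + u), then x s together with
   - u y and a third vertex w of the class of u, when u y is an edge,
   - y z and u, for z the neighbour of y coloured like u, otherwise,
   would induce a 2P2 + P1: each required non-edge is given, joins two
   vertices of the same colour, or would give a vertex of T two neighbours
   of one colour. *)

Section ColourCovers.
Variables (T : finType) (c : T -> nat) (ks : seq nat).

Lemma cover_size_le (A : {set T}) :
  uniq ks -> (forall j, j \in ks -> exists2 w, w \in A & c w = j) ->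
  size ks <= #|A|.
Proof.
move=> ks_uniq ksA; rewrite cardE -(size_map c).
apply: uniq_leq_size => // j /ksA [w wA <-].
by apply: map_f; rewrite mem_enum.
Qed.

Lemma cover_card_le_injective (A : {set T}) :
  uniq ks -> (forall j, j \in ks -> exists2 w, w \in A & c w = j) ->
  #|A| <= size ks -> {in A &, injective c}.
Proof.
move=> ks_uniq ksA leAks a b aA bA cab; apply/eqP/negPn/negP => neq_ab.
have: size ks <= #|A :\ b|.
  apply: cover_size_le => // j /ksA [w wA cw].
  have [wb | neq_wb] := eqVneq w b.
    by exists a; rewrite ?in_setD1 ?aA ?andbT // cab -wb.
  by exists w; rewrite ?in_setD1 ?neq_wb.
by have := cardsD1 b A; rewrite bA; lia.
Qed.

End ColourCovers.

Lemma mem_colours_used (V : finType) (c : V -> nat) (v : V) :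
  c v \in colours_used c.
Proof. by rewrite mem_undup; apply: map_f; rewrite mem_enum. Qed.

Lemma colouring_nadj (V : finType) (g : rel V) (c : V -> nat) (v w : V) :
  colouring g c -> c v = c w -> ~~ g v w.
Proof. by move=> [_ cprop] cvw; apply/negP => /cprop; rewrite cvw eqxx. Qed.

Section BChromatic.
Variables (V : finType) (g : rel V) (c : V -> nat) (v : V).
Hypothesis v_b : b_chromatic g c v.

Let cover_rem :
  forall j, j \in rem (c v) (colours_used c) -> exists2 w, w \in nbhd g v & c w = j.
Proof.
move=> j; rewrite mem_rem_uniq ?undup_uniq // => /andP [jv jc].
by have [w [gvw cw]] := v_b jc jv; exists w; rewrite ?inE.
Qed.

Lemma b_chromatic_deg : (size (colours_used c)).-1 <= deg g v.
Proof.
rewrite -(size_rem (mem_colours_used c v)).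
by apply: cover_size_le cover_rem; rewrite rem_uniq ?undup_uniq.
Qed.

Lemma b_chromatic_nbhd_colour_inj :
  deg g v <= (size (colours_used c)).-1 -> {in nbhd g v &, injective c}.
Proof.
rewrite -(size_rem (mem_colours_used c v)) => le_deg.
by apply: cover_card_le_injective cover_rem _; rewrite ?rem_uniq ?undup_uniq.
Qed.

End BChromatic.

Section TightBColouring.
Variables (V : finType) (g : rel V) (c : V -> nat).
Hypotheses (tightG : tight g) (bcol : b_colouring g c).
Hypothesis size_colours : size (colours_used c) = m_index g.

Lemma b_chromatic_dense (v : V) : b_chromatic g c v -> v \in dense_set g.
Proof. by move=> v_b; rewrite inE -size_colours; apply: b_chromatic_deg. Qed.

Lemma dense_colour_inj : {in dense_set g &, injective c}.
Proof.
apply: (@cover_card_le_injective _ _ (colours_used c)).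
- exact: undup_uniq.
- move=> j /bcol.2 [v [cv v_b]]; exists v => //; exact: b_chromatic_dense.
- by rewrite tightG.1 size_colours.
Qed.

Lemma dense_b_chromatic (v : V) : v \in dense_set g -> b_chromatic g c v.
Proof.
move=> vT; have [w [cw w_b]] := bcol.2 _ (mem_colours_used c v).
by rewrite -(dense_colour_inj (b_chromatic_dense w_b) vT cw).
Qed.

Lemma dense_nadj_colour_twin (v w w' : V) :
  v \in dense_set g -> g v w -> c w' = c w -> w' != w -> ~~ g v w'.
Proof.
move=> vT gvw cw'; apply: contraNN => gvw'; apply/eqP.
apply: (b_chromatic_nbhd_colour_inj (dense_b_chromatic vT)); rewrite ?inE //.
by rewrite size_colours -(tightG.2 v vT).
Qed.

End TightBColouring.

Lemma no_induced_2P2P1 (V : finType) (g : rel V) (a b c d e : V) :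
  simple_graph g -> free_2P2P1 g -> g a b -> g c d ->
  ~~ g a c -> ~~ g a d -> ~~ g b c -> ~~ g b d ->
  ~~ g e a -> ~~ g e b -> ~~ g e c -> ~~ g e d -> False.
Proof.
move=> [sym irr] free gab gcd nac nad nbc nbd nea neb nec ned; apply: free.
exists a, b, c, d, e; split => //.
have ne x y z : g x z -> ~~ g y z -> x != y by move=> gxz; apply: contraNneq => <-.
have gba : g b a by rewrite sym.
have gdc : g d c by rewrite sym.
have ab := ne _ _ _ gab (negbT (irr b)).
have cd := ne _ _ _ gcd (negbT (irr d)).
have ac : a != c by apply: ne gab _; rewrite sym.
have ad : a != d by apply: ne gab _; rewrite sym.
have bc : b != c by apply: ne gba _; rewrite sym.
have bd : b != d by apply: ne gba _; rewrite sym.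
have ae := ne _ _ _ gab neb; have be := ne _ _ _ gba nea.
have ce := ne _ _ _ gcd ned; have de := ne _ _ _ gdc nec.
by rewrite /= !inE !negb_or ab ac ad ae bc bd be cd ce de.
Qed.

Lemma card_gt2_other (T : finType) (A : {set T}) (a b : T) :
  2 < #|A| -> exists2 w, w \in A & (w != a) && (w != b).
Proof.
move=> A_gt2.
have [/subset_leq_card leAab | /subsetPn [w wA]] := boolP (A \subset [set a; b]).
  by have := leq_trans A_gt2 leAab; rewrite cards2; case: (a != b).
by rewrite !inE negb_or; exists w.
Qed.

Section NonAdjacentPair.
Variables (V : finType) (g : rel V) (c : V -> nat).
Hypotheses (simpleG : simple_graph g) (free : free_2P2P1 g) (tightG : tight g).
Hypotheses (bcol : b_colouring g c) (size_colours : size (colours_used c) = m_index g).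
Variables (u s x y : V).
Hypotheses (uT : u \in dense_set g) (nsT : s \notin dense_set g) (csu : c s = c u).
Hypotheses (xT : x \in dense_set g) (gsx : g s x) (nux : ~~ g u x).
Hypothesis yT : y \in dense_set g.

Let sym : symmetric g := simpleG.1.
Let twin := dense_nadj_colour_twin tightG bcol size_colours.
Let nadj_colour v w : c v = c w -> ~~ g v w := colouring_nadj bcol.1.
Let gxs : g x s. Proof. by rewrite sym. Qed.

Lemma T_us_adj_of_adj_u : 2 < #|colour_class c (c u)| -> g u y -> g x y.
Proof.
move=> class3 guy; apply/negPn/negP => nxy.
have [w w_class /andP [wu ws]] := card_gt2_other u s class3.
move: w_class; rewrite inE => /eqP cw.
have gyu : g y u by rewrite sym.
have nsy : ~~ g s y.
  by rewrite sym; apply: twin yT gyu csu _; apply: contraNneq nsT => ->.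
apply: (@no_induced_2P2P1 _ _ x s u y w simpleG free gxs guy) => //.
- by rewrite sym.
- exact: nadj_colour.
- by rewrite sym; apply: twin xT gxs _ ws; rewrite cw csu.
- by apply: nadj_colour; rewrite cw csu.
- exact: nadj_colour.
- by rewrite sym; apply: twin yT gyu cw wu.
Qed.

Lemma T_us_adj_of_nadj_u : y != u -> ~~ g u y -> ~~ g s y -> g x y.
Proof.
move=> nyu nuy nsy; apply/negPn/negP => nxy.
have cuy : c u != c y.
  by apply: contra nyu => /eqP /(dense_colour_inj tightG bcol size_colours uT yT) ->.
have [z [gyz cz]] :=
  dense_b_chromatic tightG bcol size_colours yT (mem_colours_used c u) cuy.
have zs : z != s by apply: contraNneq nsy => <-; rewrite sym.
apply: (@no_induced_2P2P1 _ _ x s y z u simpleG free gxs gyz) => //.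
- by apply: twin xT gxs _ zs; rewrite cz csu.
- by apply: nadj_colour; rewrite cz csu.
- by apply: nadj_colour; rewrite csu.
- exact: nadj_colour.
Qed.

End NonAdjacentPair.

Theorem mainTheorem9 (V : finType) (g : rel V) (c : V -> nat) :
  simple_graph g -> free_2P2P1 g -> tight g ->
  b_colouring g c -> size (colours_used c) = m_index g ->
  forall (u s : V),
    u \in dense_set g ->
    s \in delta g (dense_set g) ->
    c s = c u ->
    3 <= #|colour_class c (c u)| ->
    forall x y : V,
      x \in T_us g (dense_set g) u s ->
      y \in dense_set g :\: (T_us g (dense_set g) u s :|: [set u]) ->
      g x y.
Proof.
move=> simpleG free tightG bcol size_colours u s uT /setDP [_ nsT] csu class3 x y.
rewrite inE => /and3P [xT gsx nux].
rewrite in_setD in_setU in_set1 negb_or => /andP [/andP [ny_us nyu] yT].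
have [guy | nuy] := boolP (g u y).
  exact: (T_us_adj_of_adj_u simpleG free tightG bcol size_colours
            uT nsT csu xT gsx nux yT class3 guy).
apply: (T_us_adj_of_nadj_u simpleG free tightG bcol size_colours
          uT csu xT gsx nux yT nyu nuy).
by apply: contra ny_us => gsy; rewrite inE yT gsy nuy.
Qed.
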